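(* Let $\mathbf{O}\,\dot\cup\,\mathbf{S}$ be a finite set of categorical variables, $\hat{\mathbf{s}}$ a fixed value of $\mathbf{S}$, and $\mathcal{G}$ a DAG over $\mathbf{O}\cup\mathbf{S}$ in which no node of $\mathbf{S}$ has a child. Let $\mathbf{X}=\mathrm{an}_{\mathcal{G}}(\mathbf{S})$ (so $\mathbf{S}\subseteq\mathbf{X}$), $\mathbf{Y}=\mathbf{O}\setminus\mathbf{X}$, $\mathcal{G}_1=\mathcal{G}_{\mathbf{X}}$ (induced subgraph on $\mathbf{X}$), and $\mathcal{G}_2=\phi_{\mathbf{X}\setminus\mathbf{S}}(\mathcal{G}_{\mathbf{O}})$. Let $P$ be a distribution over $\mathbf{O}$ with $p(\mathbf{x}\setminus\mathbf{s})>0$ for every value $\mathbf{x}\setminus\mathbf{s}$ of $\mathbf{X}\setminus\mathbf{S}$, let $P_1$ be the marginal of $P$ over $\mathbf{X}\setminus\mathbf{S}$, and $P_2$ the conditional distribution of $\mathbf{Y}$ given $\mathbf{X}\setminus\mathbf{S}$ under $P$. Then $$P\in\mathbf{BN}(\mathcal{G})[^{\mathbf{S}=\hat{\mathbf{s}}}\iff P_1\in\mathbf{BN}(\mathcal{G}_1)[^{\mathbf{S}=\hat{\mathbf{s}}}\ \text{ and }\ P_2\in\mathbf{BN}(\mathcal{G}_2).$$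
   Context: $\mathrm{an}_{\mathcal{G}}(\mathbf{S})$ is the set of nodes that are equal to or have a directed path to some node of $\mathbf{S}$. A conditional DAG is a DAG over $\mathbf{X}'\,\dot\cup\,\mathbf{Y}'$ in which all nodes of $\mathbf{Y}'$ (fixed nodes) have no parents; nodes of $\mathbf{X}'$ are random nodes. Fixing: for a DAG $\mathcal{H}$ over $\mathbf{V}$ and $\mathbf{A}\subseteq\mathbf{V}$, $\phi_{\mathbf{A}}(\mathcal{H})$ is the conditional DAG with random nodes $\mathbf{V}\setminus\mathbf{A}$, fixed nodes $\mathbf{A}$, the edges of $\mathcal{H}$ between nodes of $\mathbf{V}\setminus\mathbf{A}$, and the edges of $\mathcal{H}$ from nodes of $\mathbf{A}$ into nodes of $\mathbf{V}\setminus\mathbf{A}$. For a (conditional) DAG $\mathcal{H}$ with random nodes $\mathbf{X}'$ and fixed nodes $\mathbf{Y}'$, $\mathbf{BN}(\mathcal{H})$ is the set of conditional distributions of $\mathbf{X}'$ given $\mathbf{Y}'$ such that each random node is conditionally independent of the random nodes that are neither its descendants nor parents, given its parents (equivalently $p(\mathbf{x}'\mid\mathbf{y}')=\prod_{X\in\mathbf{X}'}p(x\mid\mathrm{pa}_{\mathcal{H}}(X))$); for an ordinary DAG, $\mathbf{Y}'=\emptyset$. For a model $\mathbf{M}$ over $\mathbf{A}\cup\mathbf{S}$, $\mathbf{M}[^{\mathbf{S}=\hat{\mathbf{s}}}$ is the set of distributions $Q$ over $\mathbf{A}$ such that there is $P\in\mathbf{M}$ with $p(\hat{\mathbf{s}})>0$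 and $q(\mathbf{a})=p(\mathbf{a}\mid\hat{\mathbf{s}})$. *)

From HB Require Import structures.
From mathcomp Require Import all_boot all_order all_algebra.
Set Implicit Arguments. Unset Strict Implicit. Unset Printing Implicit Defensive.
Import Order.TTheory GRing.Theory Num.Theory.
Local Open Scope ring_scope.

Section Defs.
Variables (V : finType) (D : V -> finType) (R : realFieldType).

(* A partial assignment: each variable v gets either a value in D v or None.
   An assignment of a set of variables A is a partial assignment whose
   domain is exactly A. *)
Definition pasg := {dffun forall v : V, option (D v)}.

Definition dom (x : pasg) : {set V} := [set v | x v != None].

Definition restr (A : {set V}) (x : pasg) : pasg :=
  @finfun V (fun v => option (D v)) (fun v => if v \in A then x v else None).

(* union of two assignments (left-biased; used for disjoint domains) *)
Definition merge (x y : pasg) : pasg :=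
  @finfun V (fun v => option (D v))
    (fun v => if x v is Some a then Some a else y v).

Definition is_dist (A : {set V}) (p : pasg -> R) : Prop :=
  [/\ forall x, 0 <= p x,
      forall x, dom x != A -> p x = 0
    & \sum_x p x = 1].

Definition marg (A : {set V}) (p : pasg -> R) (a : pasg) : R :=
  \sum_(x | restr A x == a) p x.

(* conditional distribution of (B minus A) given A under p *)
Definition condd (B A : {set V}) (p : pasg -> R) (z : pasg) : R :=
  if dom z == B then p z / marg A p (restr A z) else 0.

Record cdag := CDag { rnodes : {set V}; fnodes : {set V}; cedge : rel V }.

Definition acyclic (E : rel V) : Prop := forall u v, E u v -> ~~ connect E v u.

(* ancestors (including the nodes themselves) *)
Definition an (E : rel V) (A : {set V}) : {set V} :=
  [set v | [exists u in A, connect E v u]].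

Definition pa (H : cdag) (v : V) : {set V} := [set u | cedge H u v].

Definition dag_on (N : {set V}) (E : rel V) : cdag := CDag N set0 E.

Definition induced (W : {set V}) (E : rel V) : cdag :=
  CDag W set0 [rel u v | [&& E u v, u \in W & v \in W]].

Definition fixing (A : {set V}) (H : cdag) : cdag :=
  CDag (rnodes H :\: A) A
       [rel u v | [&& cedge H u v, u \in rnodes H & v \in rnodes H :\: A]].

(* BN(H): conditional distributions q of the random nodes given the fixed
   nodes (q is a function on assignments of rnodes :|: fnodes, zero elsewhere)
   factorizing as a product of conditional probability tables, one per random
   node, given its parents. *)
Definition BN (H : cdag) (q : pasg -> R) : Prop :=
  exists k : V -> pasg -> R,
  [/\ forall v x, 0 <= k v x,
      forall v z, dom z = pa H v ->
        \sum_(x | dom x == [set v]) k v (merge x z) = 1,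
      forall z, dom z != rnodes H :|: fnodes H -> q z = 0
    & forall z, dom z = rnodes H :|: fnodes H ->
        q z = \prod_(v in rnodes H) k v (restr (v |: pa H v) z)].

(* M[^{S = s}: distributions Q over A obtained by conditioning some P in M
   (a model over A :|: S) on S = s, with p(s) > 0 *)
Definition condition (M : (pasg -> R) -> Prop) (A S : {set V}) (s : pasg)
    (Q : pasg -> R) : Prop :=
  exists P, [/\ M P, 0 < marg S P s &
    forall a, Q a = if dom a == A then P (merge a s) / marg S P s else 0].

End Defs.

From Pilot Require Import Defs.
From HB Require Import structures.
From mathcomp Require Import all_boot all_order all_algebra.
Import Order.TTheory GRing.Theory Num.Theory.
Local Open Scope ring_scope.
Set Implicit Arguments.
Unset Strict Implicit.
Unset Printing Implicit Defensive.

(* Write a model of BN(G) as a product of conditional probability tables,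
   one per node.  As X = an(S) is closed under parents and the nodes of S have
   no children, the tables of the nodes of X only read X, and those of the
   nodes of Y = O \ X only read O.  So the product splits into an X-part and
   a Y-part, and the Y-part sums to 1 over Y (sum out a sink of Y, then
   induct).  Conditioning on S = s, P1 is then the conditioned X-part and P2
   is exactly the Y-part; conversely, gluing the tables of a G1-model and of
   P2 gives a G-model whose conditioning on S = s is P. *)

(* The [merge] of partial assignments, not the merge of sorted lists. *)
Local Notation merge := Defs.merge.

Lemma disjoint_setD (T : finType) (A B : {set T}) : [disjoint A :\: B & B].
Proof. by have /subsetDP[] := subxx (A :\: B). Qed.

Lemma setDUK (T : finType) (A B : {set T}) : B \subset A -> A :\: B :|: B = A.
Proof. by move=> BA; rewrite setUC -{2}(setID A B) (setIidPr BA). Qed.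

Section Assignments.
Variables (V : finType) (D : V -> finType).
Local Notation T := (pasg D).
Implicit Types (A B : {set V}) (x y z : T).

Lemma domE x v : (v \in dom x) = (x v != None).
Proof. by rewrite inE. Qed.

Lemma restrE A x v : restr A x v = if v \in A then x v else None.
Proof. by rewrite ffunE. Qed.

Lemma mergeE x y v : merge x y v = if x v is Some a then Some a else y v.
Proof. by rewrite ffunE. Qed.

Lemma notin_dom x v : v \notin dom x -> x v = None.
Proof. by rewrite domE negbK => /eqP. Qed.

Lemma dom_restr A x : dom (restr A x) = A :&: dom x.
Proof. by apply/setP => v; rewrite !inE restrE; case: (v \in A). Qed.

Lemma dom_merge x y : dom (merge x y) = dom x :|: dom y.
Proof. by apply/setP => v; rewrite !inE mergeE; case: (x v). Qed.

Lemma mergeA x y z : merge x (merge y z) = merge (merge x y) z.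
Proof. by apply/ffunP => v; rewrite !mergeE; case: (x v). Qed.

Lemma mergeC x y : [disjoint dom x & dom y] -> merge x y = merge y x.
Proof.
move=> xy; apply/ffunP => v; rewrite !mergeE.
case: (boolP (v \in dom x)) => [/(disjointFr xy)/negbT/notin_dom -> | ].
  by case: (x v).
by move/notin_dom ->; case: (y v).
Qed.

Lemma restr_mergel A x y : dom x = A -> restr A (merge x y) = x.
Proof.
by move=> <-; apply/ffunP => v; rewrite restrE mergeE domE; case: (x v).
Qed.

Lemma restr_mergeNl A x y :
  [disjoint A & dom x] -> restr A (merge x y) = restr A y.
Proof.
move=> Ax; apply/ffunP => v; rewrite !restrE mergeE.
by case: ifP => // /(disjointFr Ax)/negbT/notin_dom ->.
Qed.

Lemma restr_mergeNr A x y :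
  [disjoint A & dom y] -> restr A (merge x y) = restr A x.
Proof.
move=> Ay; apply/ffunP => v; rewrite !restrE mergeE.
by case: ifP => // /(disjointFr Ay)/negbT/notin_dom ->; case: (x v).
Qed.

Lemma restr_mergeU1 v A x y :
  dom x = [set v] -> restr (v |: A) (merge x y) = merge x (restr A y).
Proof.
move=> dx; apply/ffunP => u; rewrite !(restrE, mergeE) !inE.
case: (eqVneq u v) => [->|uv] /=.
  by have := set11 v; rewrite -dx domE; case: (x v).
by rewrite notin_dom // dx inE.
Qed.

Lemma restr_dom x : restr (dom x) x = x.
Proof.
by apply/ffunP => v; rewrite restrE domE; case: ifP => // /negbFE/eqP.
Qed.

Lemma merge_restr A B x :
  dom x = A :|: B -> merge (restr A x) (restr B x) = x.
Proof.
move=> dx; apply/ffunP => v; rewrite mergeE !restrE.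
case: ifP => vA /=; first by case: (x v) => //; case: ifP.
by case: ifP => // vB; rewrite notin_dom // dx inE vA vB.
Qed.

Lemma dom_eq0 x y : dom x = set0 -> x = restr set0 y.
Proof.
by move=> dx; apply/ffunP => v; rewrite restrE inE notin_dom // dx inE.
Qed.

End Assignments.

Section Sums.
Variables (V : finType) (D : V -> finType) (R : realFieldType).
Local Notation T := (pasg D).
Implicit Types (A B : {set V}) (p f : T -> R).

Definition supported_on B p := forall x, dom x != B -> p x = 0.

Lemma big_dom_setU A B f : [disjoint A & B] ->
  \sum_(x | dom x == A :|: B) f x =
  \sum_(a | dom a == A) \sum_(b | dom b == B) f (merge a b).
Proof.
move=> AB; rewrite pair_big_dep /=.
rewrite (reindex_onto (fun ab : T * T => merge ab.1 ab.2)
                      (fun x => (restr A x, restr B x))) /=; last first.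
  by move=> x /eqP; apply: merge_restr.
apply: eq_bigl => -[a b] /=; apply/idP/idP.
  case/andP => /eqP dx /eqP[da db]; apply/andP; split; apply/eqP;
    [rewrite -da | rewrite -db]; rewrite dom_restr dx; apply/setIidPl.
    exact: subsetUl.
  exact: subsetUr.
case/andP => /eqP da /eqP db.
rewrite dom_merge da db eqxx restr_mergel //.
rewrite restr_mergeNl -?db ?restr_dom ?eqxx //.
by rewrite da db disjoint_sym.
Qed.

Lemma big_dom0 f y : \sum_(x | dom x == set0) f x = f (restr set0 y).
Proof.
apply: big_pred1 => x; apply/eqP/eqP => [/(dom_eq0 y) // | ->].
by rewrite dom_restr set0I.
Qed.

Lemma big_dom_setD A B f : A \subset B ->
  \sum_(x | dom x == B) f x =
  \sum_(a | dom a == A) \sum_(y | dom y == B :\: A) f (merge a y).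
Proof.
move=> AB; rewrite -big_dom_setU 1?disjoint_sym ?disjoint_setD //.
by rewrite setUC setDUK.
Qed.

Lemma marg_merge A B p a : A \subset B -> supported_on B p -> dom a = A ->
  marg A p a = \sum_(y | dom y == B :\: A) p (merge a y).
Proof.
move=> AB pB da.
rewrite /marg (bigID (fun x => dom x == B)) /=.
rewrite [X in _ + X]big1 ?addr0 => [|x /andP[_ /pB] //].
rewrite (eq_bigl (fun x => (dom x == B) && (restr A x == a))) => [|x].
  2: by rewrite andbC.
rewrite big_mkcondr (big_dom_setD _ AB) (bigD1 a) /=; last by rewrite da.
rewrite [X in _ + X]big1 ?addr0 => [|a' /andP[/eqP da' a'a]].
  by apply: eq_bigr => y _; rewrite restr_mergel // eqxx.
by apply: big1 => y _; rewrite restr_mergel // (negbTE a'a).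
Qed.

Lemma marg_out A B p a : A \subset B -> supported_on B p -> dom a != A ->
  marg A p a = 0.
Proof.
move=> AB pB da; apply: big1 => x /eqP ax.
case: (eqVneq (dom x) B) => [dx | /pB //].
by move: da; rewrite -ax dom_restr dx (setIidPl AB) eqxx.
Qed.

Lemma sum_dist B p : is_dist B p -> \sum_(x | dom x == B) p x = 1.
Proof.
case=> _ pB <-; rewrite [RHS](bigID (fun x => dom x == B)) /=.
by rewrite [X in _ = _ + X]big1 ?addr0 // => x /pB.
Qed.

Lemma sum_marg A B p : A \subset B -> is_dist B p ->
  \sum_(a | dom a == A) marg A p a = 1.
Proof.
move=> AB pd; have [_ pB _] := pd.
rewrite -(sum_dist pd) (big_dom_setD _ AB).
by apply: eq_bigr => a /eqP da; apply: marg_merge.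
Qed.

Lemma is_dist_dom B p : is_dist B p -> exists x : T, dom x = B.
Proof.
case=> _ pB p1; case: (pickP [pred x : T | dom x == B]) => [x /eqP | none].
  by exists x.
move: p1; rewrite big1 => [/eqP | x _]; first by rewrite eq_sym oner_eq0.
by apply/pB/negbT/none.
Qed.

End Sums.

Section Acyclic.
Variable V : finType.
Implicit Types (E : rel V) (A W : {set V}).

Lemma acyclic_subrel E E' : subrel E' E -> acyclic E -> acyclic E'.
Proof.
move=> E'E aE u v /E'E/aE; apply: contra; apply: connect_sub => x y /E'E.
exact: connect1.
Qed.

Lemma acyclic_sink E W : acyclic E -> W != set0 ->
  exists2 v, v \in W & forall u, u \in W -> ~~ E v u.
Proof.
move=> aE /set0Pn[v0 v0W].
have [v vW vmax] := arg_maxnP (fun v => #|[set w | connect E w v]|) v0W.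
exists v => // u uW; apply/negP => Evu.
suff : (#|[set w | connect E w v]| < #|[set w | connect E w u]|)%N.
  by rewrite ltnNge => /negP; apply; apply: vmax.
apply/proper_card/properP; split.
  by apply/subsetP => w; rewrite !inE => /connect_trans; apply; apply: connect1.
by exists u; rewrite !inE ?connect0 //; apply: aE.
Qed.

Lemma subset_an E A : A \subset an E A.
Proof.
apply/subsetP => v vA; rewrite inE; apply/existsP; exists v.
by rewrite vA connect0.
Qed.

Lemma an_pa E A u v : v \in an E A -> E u v -> u \in an E A.
Proof.
rewrite !inE => /existsP[w /andP[wA vw]] Euv; apply/existsP; exists w.
by rewrite wA (connect_trans (connect1 Euv)).
Qed.

End Acyclic.

Section BayesianNetworks.
Variables (V : finType) (D : V -> finType) (R : realFieldType).
Local Notation T := (pasg D).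
Implicit Types (H : cdag V) (k : V -> T -> R) (q : T -> R) (z : T).
Implicit Types (A B C W : {set V}).

Definition bn_prod H k z : R :=
  \prod_(v in rnodes H) k v (restr (v |: pa H v) z).

Definition bn_model H k z : R :=
  if dom z == rnodes H :|: fnodes H then bn_prod H k z else 0.

Definition cpt_normal H k v : Prop :=
  forall z, dom z = pa H v -> \sum_(x | dom x == [set v]) k v (merge x z) = 1.

Definition cpt_family H k : Prop :=
  (forall v x, 0 <= k v x) /\ {in rnodes H, forall v, cpt_normal H k v}.

Lemma BN_cpt_family H q :
  BN H q -> exists2 k, cpt_family H k & q =1 bn_model H k.
Proof.
case=> k [k0 kn q0 qk]; exists k => [|z]; first by split=> // v _; apply: kn.
by rewrite /bn_model; case: eqP => [/qk | /eqP/q0].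
Qed.

Lemma BN_bn_model H k q : (forall v, exists x : T, dom x = [set v]) ->
  cpt_family H k -> q =1 bn_model H k -> BN H q.
Proof.
move=> dom1 [k0 kn] qk.
(* [BN] wants a normalized table at every node, also outside [rnodes H]. *)
pose unif v (_ : T) := (#|[pred x : T | dom x == [set v]]|%:R : R)^-1.
exists (fun v => if v \in rnodes H then k v else unif v); split.
- by move=> v x; case: ifP => _; rewrite ?invr_ge0 ?ler0n.
- move=> v z dz; case: ifP => [vH | _]; first exact: kn.
  have [x dx] := dom1 v.
  rewrite sumr_const (@eq_card _ _ [pred x : T | dom x == [set v]]) //.
  rewrite -[LHS]mulr_natr mulVf // pnatr_eq0 -lt0n.
  by apply/card_gt0P; exists x; rewrite inE dx.
- by move=> z /negbTE dz; rewrite qk /bn_model dz.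
- by move=> z dz; rewrite qk /bn_model dz eqxx; apply: eq_bigr => v ->.
Qed.

Lemma marg_bn_model H k A B z : rnodes H :|: fnodes H = B -> A \subset B ->
  dom z = A ->
  marg A (bn_model H k) z = \sum_(a | dom a == B :\: A) bn_prod H k (merge a z).
Proof.
move=> dH AB dz; rewrite (marg_merge AB) => [|x /negbTE dx|] //; last first.
  by rewrite /bn_model dH dx.
apply: eq_bigr => a /eqP da; rewrite mergeC; last first.
  by rewrite dz da disjoint_sym disjoint_setD.
by rewrite /bn_model dH dom_merge da dz setDUK // eqxx.
Qed.

Lemma sum_prod_cpt H k W C z : acyclic (cedge H) ->
  {in W, forall v, cpt_normal H k v} -> dom z = C -> [disjoint W & C] ->
  {in W, forall v, pa H v \subset W :|: C} ->
  \sum_(w | dom w == W) \prod_(v in W) k v (restr (v |: pa H v) (merge z w))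
  = 1.
Proof.
move=> aH; have [n] := ubnP #|W|; elim: n W => // n IH W ltWn kW dz WC paW.
case: (eqVneq W set0) => [-> | W0]; first by rewrite (big_dom0 _ z) big_set0.
(* Sum out a sink [v] of [W] first: no other table of [W] reads [v]. *)
have [v vW vsink] := acyclic_sink aH W0.
have vpa u : u \in W -> v \notin pa H u by move=> uW; rewrite inE vsink.
have paWv : {in W, forall u, pa H u \subset W :\ v :|: C}.
  move=> u uW; apply/subsetP => w wu; rewrite !inE.
  have := subsetP (paW u uW) w wu; rewrite inE => /orP[wW | ->]; last first.
    by rewrite orbT.
  by rewrite wW andbT; apply/orP; left; apply: contraTneq wu => ->; apply: vpa.
have dWv : [disjoint W :\ v & C] by apply: disjointWl WC; apply: subsetDl.
rewrite -[RHS](IH (W :\ v) _ _ dz dWv); first last.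
- by move=> u /setD1P[_ uW]; apply: paWv.
- by move=> u /setD1P[_ uW]; apply: kW.
- by move: ltWn; rewrite (cardsD1 v W) vW.
rewrite -{1}(setD1K vW) big_dom_setU ?disjoints1 ?setD11 // exchange_big.
apply: eq_bigr => w /eqP dw; set y := merge z w.
transitivity (\sum_(x | dom x == [set v]) k v (merge x (restr (pa H v) y)) *
    \prod_(u in W :\ v) k u (restr (u |: pa H u) y)).
  apply: eq_bigr => x /eqP dx.
  have zx : [disjoint dom z & dom x].
    by rewrite dz dx disjoint_sym disjoints1 (disjointFr WC vW).
  rewrite mergeA (mergeC zx) -mergeA (big_setD1 _ vW) restr_mergeU1 //.
  congr (_ * _); apply: eq_bigr => u /setD1P[uv uW].
  rewrite restr_mergeNl // dx disjoint_sym disjoints1.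
  by rewrite in_setU1 negb_or eq_sym uv vpa.
rewrite -big_distrl /= kW ?mul1r // dom_restr /y dom_merge dz dw.
by apply/setIidPl; rewrite setUC paWv.
Qed.

End BayesianNetworks.

Section Selection.
Variables (V : finType) (D : V -> finType) (R : realFieldType).
Variables (O S : {set V}) (s : pasg D) (E : rel V) (P : pasg D -> R).
Hypotheses (hdisj : [disjoint O & S]) (hcov : O :|: S = setT) (hs : dom s = S).
Hypotheses (hdag : acyclic E) (hS : forall u v, u \in S -> ~~ E u v).
Hypothesis hP : is_dist O P.
Hypothesis hpos :
  forall a : pasg D, dom a = an E S :\: S -> 0 < marg (an E S :\: S) P a.

Local Notation T := (pasg D).
Local Notation X := (an E S).
Local Notation N := (X :\: S).
Local Notation Y := (O :\: X).
Local Notation G := (dag_on setT E).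
Local Notation G1 := (induced X E).
Local Notation G2 := (fixing N (induced O E)).
Local Notation P1 := (marg N P).
Local Notation P2 := (condd (Y :|: N) N P).

Lemma inO v : (v \in O) = (v \notin S).
Proof.
have /setP/(_ v) := hcov; rewrite !inE.
by case: (boolP (v \in O)) => [/(disjointFr hdisj) -> | _ /= ->].
Qed.

Lemma inY v : (v \in Y) = (v \notin X).
Proof.
rewrite inE inO; case: (boolP (v \in X)) => //= vX.
by apply: contra vX; apply/subsetP/subset_an.
Qed.

Lemma setCS : ~: S = O.
Proof. by apply/setP => v; rewrite inE inO. Qed.

Lemma setUNS : N :|: S = X.
Proof. by rewrite setDUK ?subset_an. Qed.

Lemma setUNY : N :|: Y = O.
Proof.
apply/setP => v; rewrite in_setU inY in_setD inO.
case: (boolP (v \in S)) => [vS | _]; last by case: (v \in X).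
by rewrite (subsetP (subset_an E S) v vS).
Qed.

Lemma subNO : N \subset O.
Proof. by rewrite -setUNY subsetUl. Qed.

Lemma supported_P : supported_on O P.
Proof. by case: hP. Qed.

Lemma setDON : O :\: N = Y.
Proof.
by apply/setP => v; rewrite !in_setD inO; case: (v \in S); rewrite ?andbF.
Qed.

Lemma dom1_exists v : exists x : T, dom x = [set v].
Proof.
have [o dO] := is_dist_dom hP; exists (restr [set v] (merge o s)).
by rewrite dom_restr dom_merge dO hs hcov setIT.
Qed.

Lemma paU1_subX v : v \in X -> v |: pa G v \subset X.
Proof.
move=> vX; apply/subsetP => u.
by rewrite in_setU1 inE => /orP[/eqP -> // | /(an_pa vX)].
Qed.

Lemma paU1_subO v : v \in O -> v |: pa G v \subset O.
Proof.
move=> vO; apply/subsetP => u; rewrite in_setU1 inE => /orP[/eqP -> // | Euv].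
by rewrite inO; apply: contraL Euv; apply: hS.
Qed.

Lemma pa_G1 v : v \in X -> pa G1 v = pa G v.
Proof.
move=> vX; apply/setP => u; rewrite !inE /= vX andbT.
by apply: andb_idr => Euv; apply: an_pa vX Euv.
Qed.

Lemma pa_G2 v : v \in Y -> pa G2 v = pa G v.
Proof.
rewrite -setDON => vY; have vO : v \in O by case/setDP: vY.
apply/setP => u; rewrite !inE /= vY vO andbT.
case: (boolP (E u v)) => //= Euv; rewrite andbb.
by apply: (subsetP (paU1_subO vO)); rewrite in_setU1 inE /= Euv orbT.
Qed.

Lemma rnodes_G2 : rnodes G2 = Y.
Proof. exact: setDON. Qed.

Lemma bn_prod_chain (k : V -> T -> R) a y : dom a = N -> dom y = Y ->
  bn_prod G k (merge (merge a y) s) =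
  bn_prod G1 k (merge a s) * bn_prod G2 k (merge a y).
Proof.
move=> da dy; rewrite /bn_prod rnodes_G2 /= (big_setID X) setTI setTD.
have ys : [disjoint dom y & dom s].
  by rewrite dy hs; apply: disjointWl hdisj; apply: subsetDl.
congr (_ * _).
  apply: eq_bigr => v vX; rewrite pa_G1 // -mergeA (mergeC ys) mergeA.
  rewrite restr_mergeNr // dy disjoint_sym.
  exact: disjointWr (paU1_subX vX) (disjoint_setD O X).
apply: eq_big => [v | v]; first by rewrite inY inE.
rewrite inE -inY => vY; rewrite pa_G2 // restr_mergeNr // hs.
by apply: disjointWl hdisj; apply: paU1_subO; case/setDP: vY.
Qed.

Lemma sum_bn_prod_G2 (k : V -> T -> R) a : cpt_family G2 k -> dom a = N ->
  \sum_(y | dom y == Y) bn_prod G2 k (merge a y) = 1.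
Proof.
move=> [_ kn] da; rewrite -rnodes_G2; apply: (sum_prod_cpt (C := N)) => //.
- by apply: acyclic_subrel hdag => u v /andP[/andP[]].
- exact: (@disjoint_setD _ O N).
move=> v _; rewrite /= setDUK ?subNO //.
by apply/subsetP => u; rewrite inE => /and3P[/and3P[]].
Qed.

Lemma condition_BN_split :
  condition (BN G) O S s P -> condition (BN G1) N S s P1 /\ BN G2 P2.
Proof.
case=> P0 [/BN_cpt_family[k [k0 kn] P0k] m_gt0 Pm].
set m := marg S P0 s in m_gt0 Pm.
have kG1 : cpt_family G1 k by split=> // v vX z; rewrite pa_G1 //; apply: kn.
have kG2 : cpt_family G2 k.
  by split=> // v vY z; rewrite pa_G2 -?rnodes_G2 //; apply: kn.
have P_bn a y : dom a = N -> dom y = Y ->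
    P (merge a y) = bn_prod G1 k (merge a s) * bn_prod G2 k (merge a y) / m.
  move=> da dy; rewrite Pm P0k /bn_model !dom_merge da dy hs setUNY hcov /=.
  by rewrite setU0 !eqxx bn_prod_chain.
have P1_bn a : dom a = N -> P1 a = bn_prod G1 k (merge a s) / m.
  move=> da; rewrite (marg_merge subNO supported_P da) setDON.
  under eq_bigr => y /eqP dy do rewrite P_bn //.
  by rewrite -mulr_suml -mulr_sumr sum_bn_prod_G2 // mulr1.
have m_G1 : marg S (bn_model G1 k) s = m.
  rewrite (marg_bn_model k (B := X)) ?setU0 ?subset_an //.
  rewrite -[RHS]mulr1 -(sum_marg subNO hP) mulr_sumr.
  by apply: eq_bigr => a /eqP da; rewrite P1_bn // mulrCA divff ?mulr1 ?gt_eqF.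
split.
  exists (bn_model G1 k); rewrite m_G1; split=> //.
    exact: BN_bn_model dom1_exists kG1 _.
  move=> a; case: eqP => [da | /eqP da]; last exact: marg_out subNO supported_P da.
  by rewrite P1_bn // /bn_model /= setU0 dom_merge da hs setUNS eqxx.
apply: (BN_bn_model dom1_exists kG2) => z; rewrite /condd /bn_model /= setDON.
case: eqP => // dz.
have dN : dom (restr N z) = N by rewrite dom_restr dz (setIidPl (subsetUr _ _)).
have dY : dom (restr Y z) = Y by rewrite dom_restr dz (setIidPl (subsetUl _ _)).
have ez : z = merge (restr N z) (restr Y z) by rewrite merge_restr // dz setUC.
have P1_neq0 : P1 (restr N z) != 0 by rewrite gt_eqF // hpos.
rewrite P1_bn // in P1_neq0.
rewrite {1}ez P_bn // P1_bn // -ez.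
set b1 := bn_prod G1 k _ in P1_neq0 *.
by rewrite [b1 * _]mulrC -[_ * b1 / m]mulrA mulfK.
Qed.

Lemma condition_BN_merge :
  condition (BN G1) N S s P1 -> BN G2 P2 -> condition (BN G) O S s P.
Proof.
case=> P0 [/BN_cpt_family[k1 [k10 k1n] P0k] m_gt0 P1m].
case/BN_cpt_family=> k2 [k20 k2n] P2k.
set m := marg S P0 s in m_gt0 P1m.
pose k v := if v \in X then k1 v else k2 v.
have kG : cpt_family G k.
  split=> [v x | v _ z]; rewrite /k; case: ifP => vX //.
    by rewrite -pa_G1 //; apply: k1n.
  by rewrite -pa_G2 ?inY ?vX //; apply: k2n; rewrite rnodes_G2 inY vX.
have bn1 z : bn_prod G1 k z = bn_prod G1 k1 z.
  by apply: eq_bigr => v vX; rewrite /k vX.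
have bn2 z : bn_prod G2 k z = bn_prod G2 k2 z.
  by apply: eq_bigr => v; rewrite rnodes_G2 inY /k => /negbTE ->.
have P0_bn a : dom a = O -> bn_prod G k (merge a s) = m * P a.
  move=> da; set a1 := restr N a; set y := restr Y a.
  have da1 : dom a1 = N by rewrite dom_restr da (setIidPl subNO).
  have dy : dom y = Y by rewrite dom_restr da (setIidPl _) // subsetDl.
  have ea : a = merge a1 y by rewrite merge_restr // da setUNY.
  have P1_neq0 : P1 a1 != 0 by rewrite gt_eqF // hpos.
  rewrite {1}ea bn_prod_chain // bn1 bn2.
  have -> : bn_prod G1 k1 (merge a1 s) = P1 a1 * m.
    rewrite P1m da1 eqxx divfK ?gt_eqF // P0k /bn_model /= setU0.
    by rewrite dom_merge da1 hs setUNS eqxx.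
  have := P2k (merge a1 y); rewrite /condd /bn_model /= setDON.
  rewrite dom_merge da1 dy (setUC N) eqxx restr_mergel // -ea => <-.
  by rewrite [P1 a1 * m]mulrC -mulrA [P1 a1 * _]mulrCA mulfV // mulr1.
have m_G : marg S (bn_model G k) s = m.
  rewrite (marg_bn_model k (B := setT)) ?setU0 ?subsetT // setTD setCS.
  rewrite -[RHS]mulr1 -(sum_dist hP) mulr_sumr.
  by apply: eq_bigr => a /eqP da; rewrite P0_bn.
exists (bn_model G k); rewrite m_G; split=> //.
  exact: BN_bn_model dom1_exists kG _.
move=> a; case: eqP => [da | /eqP da]; last exact: supported_P.
rewrite /bn_model /= setU0 dom_merge da hs hcov eqxx P0_bn //.
by rewrite mulrC mulKf ?gt_eqF.
Qed.

End Selection.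

Theorem theorem1 (V : finType) (D : V -> finType) (R : realFieldType)
  (O S : {set V}) (hdisj : [disjoint O & S]) (hcov : O :|: S = setT)
  (s : pasg D) (hs : dom s = S)
  (E : rel V) (hdag : acyclic E) (hS : forall u v, u \in S -> ~~ E u v)
  (P : pasg D -> R) (hP : is_dist O P)
  (hpos : forall a : pasg D, dom a = an E S :\: S ->
            0 < marg (an E S :\: S) P a) :
  let X := an E S in
  let Y := O :\: X in
  let G := dag_on setT E in
  let G1 := induced X E in
  let G2 := fixing (X :\: S) (induced O E) in
  let P1 := marg (X :\: S) P in
  let P2 := condd (Y :|: (X :\: S)) (X :\: S) P in
  condition (BN G) O S s P <->
  (condition (BN G1) (X :\: S) S s P1 /\ BN G2 P2).
Proof.
move=> X Y G G1 G2 P1 P2; split=> [|[]].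
  exact: condition_BN_split.
exact: condition_BN_merge.
Qed.
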